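(* Let $A=(a_1\ a_2\ a_3)$ be a $1\times3$ matrix of pairwise distinct positive integers whose toric ideal $I_A$ is a complete intersection. Let $M=\{b,c\}$ be a minimal Markov basis for $A$ with $b=(b_1,-b_2,0)$ and $c=(c_1,c_2,-c_3)$, where $b_1,b_2,c_3>0$, $c_1,c_2\ge 0$ are integers and $b_1>b_2$. Then the following are equivalent: (1) $M$ is distance reducing; (2) $M$ reduces the distance of the circuit $z=\gamma(0,a_3,-a_2)$, where $\gamma=1/\gcd(a_2,a_3)$; (3) $c_1<c_2+c_3$.
   Context: For $z\in\mathbb Z^n$, $z^+,z^-\in\mathbb N^n$ denote the unique vectors with disjoint supports and $z=z^+-z^-$; $\|\cdot\|$ is the $1$-norm. The toric ideal is $I_A=\langle x^{u^+}-x^{u^-}:u\in\ker(A)\rangle$; it is a complete intersection if it is generated by $\dim\ker(A)$ elements. A Markov basis is a set $B\subseteq\ker(A)$ whose binomials $x^{u^+}-x^{u^-}$ generate $I_A$; minimal means no proper subset is a Markov basis. For nonzero $z\in\ker(A)$, $u\in\ker(A)$ reduces the distance of $z$ if there exist $(p,q)\in\{(z^+,z^-),(z^-,z^+)\}$ and $\varepsilon\in\{\pm1\}$ with $p+\varepsilon u\in\mathbb N^n$ and $\|p+\varepsilon u-q\|<\|z\|$. $B$ reduces the distance of $Z$ if each nonzero $z\in Z$ has its distance reduced by some element of $B$; $B$ is distance reducing if it reduces the distance of $\ker(A)$. *)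

From HB Require Import structures.
From mathcomp Require Import all_boot all_order all_algebra.
From mathcomp Require Import mpoly.
Set Implicit Arguments. Unset Strict Implicit. Unset Printing Implicit Defensive.
Import Order.TTheory GRing.Theory Num.Theory.
Local Open Scope ring_scope.

Definition zpos n (z : 'cV[int]_n) : 'cV[int]_n := \col_i Num.max (z i 0) 0.
Definition zneg n (z : 'cV[int]_n) : 'cV[int]_n := \col_i Num.max (- z i 0) 0.

Definition norm1 n (z : 'cV[int]_n) : int := \sum_i `|z i 0|.

Definition nonneg n (p : 'cV[int]_n) : Prop := forall i, 0 <= p i 0.

Definition in_ker m n (A : 'M[int]_(m, n)) (u : 'cV[int]_n) : Prop := A *m u = 0.

Definition dimker m n (A : 'M[int]_(m, n)) : nat :=
  (n - \rank (map_mx (fun x : int => x%:~R : rat) A))%N.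

Definition mono n (p : 'cV[int]_n) : 'X_{1..n} := [multinom absz (p i ord0) | i < n].

Definition binom (F : fieldType) n (u : 'cV[int]_n) : {mpoly F[n]} :=
  'X_[mono (zpos u)] - 'X_[mono (zneg u)].
Arguments binom F {n} u.

Definition ideal_gen (F : fieldType) n (S : {mpoly F[n]} -> Prop) :
  {mpoly F[n]} -> Prop :=
  fun p => exists l : seq ({mpoly F[n]} * {mpoly F[n]}),
    (forall x, x \in l -> S x.2) /\ p = \sum_(x <- l) x.1 * x.2.

Definition toric_ideal (F : fieldType) m n (A : 'M[int]_(m, n)) : {mpoly F[n]} -> Prop :=
  ideal_gen (fun f => exists u, in_ker A u /\ f = binom F u).
Arguments toric_ideal F {m n} A _.

Definition complete_intersection (F : fieldType) m n (A : 'M[int]_(m, n)) : Prop :=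
  exists s : seq {mpoly F[n]}, size s = dimker A /\
    (forall p, ideal_gen (fun f => f \in s) p <-> toric_ideal F A p).
Arguments complete_intersection F {m n} A.

Definition markov_basis (F : fieldType) m n (A : 'M[int]_(m, n))
  (B : 'cV[int]_n -> Prop) : Prop :=
  (forall u, B u -> in_ker A u) /\
  (forall p, ideal_gen (fun f => exists u, B u /\ f = binom F u) p <-> toric_ideal F A p).
Arguments markov_basis F {m n} A B.

Definition minimal_markov_basis (F : fieldType) m n (A : 'M[int]_(m, n))
  (B : 'cV[int]_n -> Prop) : Prop :=
  markov_basis F A B /\
  forall B' : 'cV[int]_n -> Prop,
    (forall u, B' u -> B u) -> (exists u, B u /\ ~ B' u) -> ~ markov_basis F A B'.
Arguments minimal_markov_basis F {m n} A B.

Definition reduces_distance m n (A : 'M[int]_(m, n)) (u z : 'cV[int]_n) : Prop :=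
  in_ker A u /\
  exists p q, ((p = zpos z /\ q = zneg z) \/ (p = zneg z /\ q = zpos z)) /\
  exists eps : int, (eps = 1 \/ eps = -1) /\
    nonneg (p + eps *: u) /\ norm1 (p + eps *: u - q) < norm1 z.

Definition reduces_distance_of m n (A : 'M[int]_(m, n))
  (B Z : 'cV[int]_n -> Prop) : Prop :=
  forall z, Z z -> z != 0 -> exists u, B u /\ reduces_distance A u z.

Definition distance_reducing m n (A : 'M[int]_(m, n)) (B : 'cV[int]_n -> Prop) : Prop :=
  reduces_distance_of A B (in_ker A).

Definition row3 (x y z : int) : 'M[int]_(1, 3) := \row_(i < 3) [:: x; y; z]`_i.
Definition vec3 (x y z : int) : 'cV[int]_3 := \col_(i < 3) [:: x; y; z]`_i.

(* Because {b, c} is a Markov basis, every u in ker(A) lies in Z b + Z c: a weight on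
   monomials that is invariant under the moves b and c vanishes on the ideal they
   generate, and the indicator of the coset u^- + Z b + Z c is such a weight.
   Up to sign, a nonzero al b + be c either has first coordinate >= b1, and then b
   lowers its 1-norm by b1 - b2 > 0, or has third coordinate >= c3 and second
   <= -c2, and then c changes its 1-norm by c1 - c2 - c3.  The circuit z is
   al b + be c with al <= 0 < be, so c2 <= z_2 and c3 <= -z_3: then neither z +- b
   nor z + c is shorter than z, while z - c is shorter iff c1 < c2 + c3. *)

From HB Require Import structures.
From mathcomp Require Import all_boot all_order all_algebra.
From mathcomp Require Import mpoly.
From mathcomp Require Import ring zify.
From Stdlib Require Import ClassicalEpsilon.
Set Implicit Arguments. Unset Strict Implicit. Unset Printing Implicit Defensive.
Import Order.TTheory GRing.Theory Num.Theory.
Local Open Scope ring_scope.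

Section Weight.
Variables (F : fieldType) (n : nat) (w : 'X_{1..n} -> F).

Definition mweight (p : {mpoly F[n]}) : F := \sum_(m <- msupp p) p@_m * w m.

Lemma mweightE p s : uniq s -> {subset msupp p <= s} ->
  mweight p = \sum_(m <- s) p@_m * w m.
Proof.
move=> us sub; rewrite (bigID (mem (msupp p))) /= [X in _ + X]big1 ?addr0; last first.
  by move=> m /memN_msupp_eq0 ->; rewrite mul0r.
rewrite -big_filter; apply: perm_big; apply: uniq_perm; rewrite ?filter_uniq //.
by move=> m; rewrite mem_filter andb_idr //; apply: sub.
Qed.

Lemma mweightB : zmod_morphism mweight.
Proof.
move=> p q; set s := undup (msupp p ++ msupp q).
have us : uniq s by apply: undup_uniq.
have sp : {subset msupp p <= s} by move=> m h; rewrite mem_undup mem_cat h.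
have sq : {subset msupp q <= s} by move=> m h; rewrite mem_undup mem_cat h orbT.
have spq : {subset msupp (p - q) <= s}.
  move=> m /msuppD_le; rewrite mem_cat (perm_mem (msuppN _)) => /orP[] h.
  - exact: sp.
  - exact: sq.
rewrite (mweightE us spq) (mweightE us sp) (mweightE us sq) -sumrB.
by apply: eq_bigr => m _; rewrite mcoeffB mulrBl.
Qed.

HB.instance Definition _ := GRing.isZmodMorphism.Build {mpoly F[n]} F mweight mweightB.

Lemma mweightX m : mweight 'X_[m] = w m.
Proof. by rewrite /mweight msuppX big_seq1 mcoeffX eqxx mul1r. Qed.

Lemma mweightMX f m : mweight (f * 'X_[m]) = \sum_(k <- msupp f) f@_k * w (m + k)%MM.
Proof.
rewrite /mweight (perm_big _ (msuppMX f m)) big_map.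
by apply: eq_bigr => k _; rewrite mcoeffMX.
Qed.

Lemma mweight_ideal_gen (S : {mpoly F[n]} -> Prop) p :
  (forall f s, S s -> mweight (f * s) = 0) -> ideal_gen S p -> mweight p = 0.
Proof.
move=> S0 [l [lS ->]]; rewrite raddf_sum /=.
by apply: big1_seq => x /andP[_ /lS]; apply: S0.
Qed.

Lemma mweight_binom_mul f (v : 'cV[int]_n) :
  (forall m, w (mono (zpos v) + m)%MM = w (mono (zneg v) + m)%MM) ->
  mweight (f * binom F v) = 0.
Proof.
move=> wv; rewrite /binom mulrBr raddfB /= !mweightMX -sumrB big1 // => m _.
by rewrite wv subrr.
Qed.

End Weight.

Definition mvec n (m : 'X_{1..n}) : 'cV[int]_n := \col_i (m i)%:Z.

Lemma mvecD n (m1 m2 : 'X_{1..n}) : mvec (m1 + m2)%MM = mvec m1 + mvec m2.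
Proof. by apply/matrixP => i j; rewrite !mxE mnmDE PoszD. Qed.

Lemma mvec_mono n (p : 'cV[int]_n) : nonneg p -> mvec (mono p) = p.
Proof.
by move=> p0; apply/matrixP => i j; rewrite !mxE mnmE (ord1 j) gez0_abs.
Qed.

Lemma zpos_nonneg n (z : 'cV[int]_n) : nonneg (zpos z).
Proof. by move=> i; rewrite mxE le_max lexx orbT. Qed.

Lemma zneg_nonneg n (z : 'cV[int]_n) : nonneg (zneg z).
Proof. by move=> i; rewrite mxE le_max lexx orbT. Qed.

Lemma zpos_sub_zneg n (z : 'cV[int]_n) : zpos z - zneg z = z.
Proof.
apply/matrixP => i j; rewrite !mxE ord1.
case: (lerP 0 (z i 0)) => h.
- by rewrite max_r ?subr0 // oppr_le0.
- by rewrite max_l ?sub0r ?opprK // oppr_ge0 ltW.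
Qed.

Lemma markov_basis_ker_invariant (F : fieldType) k n (A : 'M[int]_(k, n))
    (B L : 'cV[int]_n -> Prop) :
  markov_basis F A B -> L 0 -> (forall x v, B v -> L (x + v) <-> L x) ->
  forall u, in_ker A u -> L u.
Proof.
move=> [_ genB] L0 BL u ku.
pose w m : F := if excluded_middle_informative (L (mvec m - zneg u)) then 1 else 0.
have w_inv v m : B v -> w (mono (zpos v) + m)%MM = w (mono (zneg v) + m)%MM.
  move=> Bv; rewrite /w !mvecD (mvec_mono (zpos_nonneg v)) (mvec_mono (zneg_nonneg v)).
  have -> : zpos v + mvec m - zneg u = (zneg v + mvec m - zneg u) + v.
    by rewrite -{3}(zpos_sub_zneg v) [RHS]addrC !addrA subrK.
  move/BL: Bv => /(_ (zneg v + mvec m - zneg u)) Lv.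
  case: excluded_middle_informative => h1; case: excluded_middle_informative => h2 //.
  - by case: h2; apply/Lv.
  - by case: h1; apply/Lv.
have : mweight w (binom F u) = 0.
  apply: (mweight_ideal_gen (S := fun f => exists v, B v /\ f = binom F v)).
    by move=> f _ [v [Bv ->]]; apply: mweight_binom_mul => m; apply: w_inv.
  apply/genB; exists [:: (1, binom F u)]; rewrite big_seq1 mul1r; split=> //.
  by move=> x; rewrite inE => /eqP -> /=; exists u.
rewrite /binom raddfB /= !mweightX /w (mvec_mono (zpos_nonneg u)) (mvec_mono (zneg_nonneg u)).
rewrite zpos_sub_zneg subrr.
case: excluded_middle_informative => [//|_] /=.
case: excluded_middle_informative => [_|//] /=.
by rewrite sub0r => /eqP; rewrite oppr_eq0 oner_eq0.
Qed.

Lemma markov_pair_ker_span (F : fieldType) k n (A : 'M[int]_(k, n)) (b c u : 'cV[int]_n) :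
  markov_basis F A (fun v => v = b \/ v = c) -> in_ker A u ->
  exists al be : int, u = al *: b + be *: c.
Proof.
pose L x := exists al be : int, x = al *: b + be *: c.
move=> markovA; apply: (markov_basis_ker_invariant (L := L) markovA).
  by exists 0, 0; rewrite !scale0r addr0.
move=> x v [->|->]; split=> -[al [be xE]].
- by exists (al - 1), be; rewrite scalerBl scale1r addrAC -xE addrK.
- by exists (al + 1), be; rewrite xE scalerDl scale1r addrAC.
- by exists al, (be - 1); rewrite scalerBl scale1r addrA -xE addrK.
- by exists al, (be + 1); rewrite xE scalerDl scale1r addrA.
Qed.

Lemma zposN n (z : 'cV[int]_n) : zpos (- z) = zneg z.
Proof. by apply/matrixP => i j; rewrite !mxE. Qed.

Lemma znegN n (z : 'cV[int]_n) : zneg (- z) = zpos z.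
Proof. by apply/matrixP => i j; rewrite !mxE opprK. Qed.

Lemma norm1N n (z : 'cV[int]_n) : norm1 (- z) = norm1 z.
Proof. by apply: eq_bigr => i _; rewrite mxE normrN. Qed.

Section Reduction.
Variables (m n : nat) (A : 'M[int]_(m, n)).

Lemma reduces_distanceN u z : reduces_distance A u z -> reduces_distance A u (- z).
Proof.
move=> [ku [p [q [pq [eps [heps [p0 lt]]]]]]]; split=> //; exists p, q.
by rewrite zposN znegN norm1N; split; [tauto | exists eps].
Qed.

Lemma reduces_distance_zpos u z eps : in_ker A u -> (eps = 1 \/ eps = -1) ->
  nonneg (zpos z + eps *: u) -> norm1 (z + eps *: u) < norm1 z ->
  reduces_distance A u z.
Proof.
move=> ku heps p0 lt; split=> //; exists (zpos z), (zneg z); split; first by left.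
by exists eps; rewrite addrAC zpos_sub_zneg.
Qed.

Lemma reduces_distance_norm1 u z : reduces_distance A u z ->
  norm1 (z - u) < norm1 z \/ norm1 (z + u) < norm1 z.
Proof.
move=> [_ [p [q [pq [eps [heps [_]]]]]]]; rewrite addrAC.
have [->|->] : p - q = z \/ p - q = - z.
  by case: pq => -[-> ->]; [left | right; rewrite -opprB]; rewrite zpos_sub_zneg.
all: case: heps => ->; rewrite ?scale1r ?scaleN1r => lt.
- by right.
- by left.
- by left; rewrite addrC -opprB norm1N in lt.
- by right; rewrite -opprD norm1N in lt.
Qed.

End Reduction.

Lemma vec3D x y z x' y' z' :
  vec3 x y z + vec3 x' y' z' = vec3 (x + x') (y + y') (z + z').
Proof. by apply/matrixP => i j; rewrite !mxE; case: i => -[|[|[]]]. Qed.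

Lemma vec3N x y z : - vec3 x y z = vec3 (- x) (- y) (- z).
Proof. by apply/matrixP => i j; rewrite !mxE; case: i => -[|[|[]]]. Qed.

Lemma scale_vec3 a x y z : a *: vec3 x y z = vec3 (a * x) (a * y) (a * z).
Proof. by apply/matrixP => i j; rewrite !mxE; case: i => -[|[|[]]]. Qed.

Lemma zpos_vec3 x y z :
  zpos (vec3 x y z) = vec3 (Num.max x 0) (Num.max y 0) (Num.max z 0).
Proof. by apply/matrixP => i j; rewrite !mxE; case: i => -[|[|[]]]. Qed.

Lemma norm1_vec3 x y z : norm1 (vec3 x y z) = `|x| + `|y| + `|z|.
Proof. by rewrite /norm1 !big_ord_recr big_ord0 /= !mxE /= add0r. Qed.

Lemma nonneg_vec3 x y z : nonneg (vec3 x y z) <-> [/\ 0 <= x, 0 <= y & 0 <= z].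
Proof.
split=> [v0 | [x0 y0 z0] i]; first by move: (v0 0) (v0 1) (v0 2); rewrite !mxE.
by rewrite mxE; case: i => -[|[|[]]].
Qed.

Lemma in_ker_row3 a1 a2 a3 x y z :
  in_ker (row3 a1 a2 a3) (vec3 x y z) <-> a1 * x + a2 * y + a3 * z = 0.
Proof.
rewrite /in_ker -matrixP; split=> [/(_ 0 0) | h i j]; rewrite ?(ord1 i) ?(ord1 j);
by rewrite !mxE !big_ord_recr big_ord0 /= !mxE /= add0r.
Qed.

Lemma vec3_eq0 x y z : (vec3 x y z == 0) = [&& x == 0, y == 0 & z == 0].
Proof.
apply/eqP/and3P => [/matrixP v0 | [/eqP-> /eqP-> /eqP->]].
  by move: (v0 0 0) (v0 1 0) (v0 2 0); rewrite !mxE /= => -> -> ->.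
by apply/matrixP => i j; rewrite !mxE; case: i => -[|[|[]]].
Qed.

Lemma vec3_inj x y z x' y' z' :
  vec3 x y z = vec3 x' y' z' -> [/\ x = x', y = y' & z = z'].
Proof. by move/matrixP => h; move: (h 0 0) (h 1 0) (h 2 0); rewrite !mxE. Qed.

Section Row3.
Variables (m : nat) (A : 'M[int]_(m, 3)) (b1 b2 c1 c2 c3 : int).
Local Notation b := (vec3 b1 (- b2) 0).
Local Notation c := (vec3 c1 c2 (- c3)).

Lemma b_reduces_distance x y z :
  in_ker A b -> 0 <= b2 -> b2 < b1 -> b1 <= x -> reduces_distance A b (vec3 x y z).
Proof.
move=> kb b2_ge0 b21 b1x; apply: (@reduces_distance_zpos _ _ _ _ _ (-1)) => //.
- by right.
- by rewrite zpos_vec3 scaleN1r vec3N vec3D; apply/nonneg_vec3; split; lia.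
- by rewrite scaleN1r vec3N vec3D !norm1_vec3; lia.
Qed.

Lemma c_reduces_distance x y z :
  in_ker A c -> 0 <= c1 -> 0 <= c2 -> c1 < c2 + c3 -> y <= - c2 -> c3 <= z ->
  reduces_distance A c (vec3 x y z).
Proof.
move=> kc c1_ge0 c2_ge0 c123 yc2 c3z; apply: (@reduces_distance_zpos _ _ _ _ _ 1) => //.
- by left.
- by rewrite zpos_vec3 scale1r vec3D; apply/nonneg_vec3; split; lia.
- by rewrite scale1r vec3D !norm1_vec3; lia.
Qed.

Lemma pair_reduces_span al be :
  in_ker A b -> in_ker A c -> 0 <= b2 -> b2 < b1 ->
  0 <= c1 -> 0 <= c2 -> 0 <= c3 -> c1 < c2 + c3 -> (al != 0) || (be != 0) ->
  exists v, (v = b \/ v = c) /\ reduces_distance A v (al *: b + be *: c).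
Proof.
move=> kb kc b2_ge0 b21 c1_ge0 c2_ge0 c3_ge0 c123.
wlog pos : al be / (0 < be) || (be == 0) && (0 < al).
  move=> gen nz; have [/gen/(_ nz)//|neg] := boolP ((0 < be) || (be == 0) && (0 < al)).
  have nzN : (- al != 0) || (- be != 0) by rewrite !oppr_eq0.
  have [v [Mv red]] := gen (- al) (- be) ltac:(lia) nzN.
  exists v; split=> //; rewrite -[_ + _]opprK; apply: reduces_distanceN.
  by rewrite opprD -!scaleNr.
move=> _; rewrite !scale_vec3 vec3D.
have [al_gt0|al_le0] := ltrP 0 al.
- have be_ge0 : 0 <= be by move: pos; lia.
  exists b; split; first by left.
  by apply: b_reduces_distance => //; nia.
- have be_gt0 : 0 < be by move: pos; lia.
  exists c; split; first by right.
  rewrite -[X in reduces_distance _ _ X]opprK vec3N; apply: reduces_distanceN.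
  by apply: c_reduces_distance => //; nia.
Qed.

Lemma pair_reduces_circuit_lt x y :
  0 <= b2 -> b2 < b1 -> 0 <= c2 -> c2 <= y -> 0 <= c3 -> c3 <= x ->
  (exists v, (v = b \/ v = c) /\ reduces_distance A v (vec3 0 y (- x))) ->
  c1 < c2 + c3.
Proof.
move=> b2_ge0 b21 c2_ge0 c2y c3_ge0 c3x [v [[->|->] /reduces_distance_norm1]].
all: by rewrite vec3N !vec3D !norm1_vec3; lia.
Qed.

End Row3.

Lemma divz_dvd_gt0 d k : (d %| k)%Z -> 0 <= d -> 0 < k -> 0 < divz k d.
Proof. by move=> /divzK kE d_ge0 k_gt0; nia. Qed.

Lemma gcdz_circuit_in_ker a1 a2 a3 :
  in_ker (row3 a1 a2 a3) (vec3 0 (divz a3 (gcdz a2 a3)) (- divz a2 (gcdz a2 a3))).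
Proof.
apply/in_ker_row3; move: (divzK (dvdz_gcdl a2 a3)) (divzK (dvdz_gcdr a2 a3)).
move: (gcdz a2 a3) => g; move: (divz a2 g) (divz a3 g) => x y <- <-.
ring.
Qed.

Theorem theorem3p5 (F : fieldType) (a1 a2 a3 b1 b2 c1 c2 c3 : int) :
  0 < a1 -> 0 < a2 -> 0 < a3 ->
  a1 != a2 -> a1 != a3 -> a2 != a3 ->
  complete_intersection F (row3 a1 a2 a3) ->
  0 < b1 -> 0 < b2 -> 0 < c3 -> 0 <= c1 -> 0 <= c2 -> b2 < b1 ->
  minimal_markov_basis F (row3 a1 a2 a3)
    (fun v => v = vec3 b1 (- b2) 0 \/ v = vec3 c1 c2 (- c3)) ->
  let M := fun v => v = vec3 b1 (- b2) 0 \/ v = vec3 c1 c2 (- c3) in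
  let g := gcdz a2 a3 in
  let z := vec3 0 (divz a3 g) (- divz a2 g) in
  (distance_reducing (row3 a1 a2 a3) M <->
     reduces_distance_of (row3 a1 a2 a3) M (fun v => v = z)) /\
  (reduces_distance_of (row3 a1 a2 a3) M (fun v => v = z) <-> c1 < c2 + c3).
Proof.
move=> _ a2_gt0 a3_gt0 _ _ _ _ b1_gt0 b2_gt0 c3_gt0 c1_ge0 c2_ge0 b21 [markovM _] M g z.
have kb : in_ker (row3 a1 a2 a3) (vec3 b1 (- b2) 0) by apply: markovM.1; left.
have kc : in_ker (row3 a1 a2 a3) (vec3 c1 c2 (- c3)) by apply: markovM.1; right.
have kz : in_ker (row3 a1 a2 a3) z := gcdz_circuit_in_ker a1 a2 a3.
have span := markov_pair_ker_span markovM.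
have reducing : c1 < c2 + c3 -> distance_reducing (row3 a1 a2 a3) M.
  move=> c123 u /span [al [be ->]] nz; apply: pair_reduces_span => //; try lia.
  apply: contraNT nz; rewrite negb_or !negbK => /andP[/eqP-> /eqP->].
  by rewrite !scale0r addr0.
have circuit : reduces_distance_of (row3 a1 a2 a3) M (fun v => v = z) -> c1 < c2 + c3.
  move=> red; have g_ge0 : 0 <= g by [].
  have A2_gt0 := divz_dvd_gt0 (dvdz_gcdl a2 a3) g_ge0 a2_gt0.
  have A3_gt0 := divz_dvd_gt0 (dvdz_gcdr a2 a3) g_ge0 a3_gt0.
  have [al [be]] := span _ kz; rewrite /z !scale_vec3 vec3D => /vec3_inj[e1 e2 e3].
  have be_gt0 : 0 < be by nia.
  have al_le0 : al <= 0 by nia.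
  apply: (@pair_reduces_circuit_lt _ _ b1 b2 c1 c2 c3 (divz a2 g) (divz a3 g)); try nia.
  by apply: red; rewrite // vec3_eq0; lia.
split; split.
- by move=> red u ->; apply: red.
- by move/circuit/reducing.
- exact: circuit.
- by move=> c123 u ->; apply: reducing.
Qed.
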